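(* Let $\Lambda_1, \Lambda_2$ be integral lattices. Any isomorphism of $\rho$-invariants $\varphi: (C(\Lambda_1),\rho_1) \to (C(\Lambda_2),\rho_2)$ induces an isomorphism of discriminant forms $\varphi: (\overline{\Lambda}_1, b_1) \to (\overline{\Lambda}_2, b_2)$ (namely the group isomorphism underlying the torsor isomorphism preserves the discriminant forms).
   Context: A lattice is a finitely generated free abelian group $\Lambda$ with a non-degenerate symmetric $\mathbb{Q}$-valued bilinear form $\langle\,,\rangle$, integral if valued in $\mathbb{Z}$; $|x| = \langle x,x\rangle$; $\sigma(\Lambda)$ is the signature. $\Lambda^* = \{x\in\Lambda\otimes\mathbb{Q}: \langle x,y\rangle\in\mathbb{Z}\ \forall y\in\Lambda\}$, $\overline{\Lambda} = \Lambda^*/\Lambda$, with discriminant form $b(\bar x,\bar y) \equiv \langle x,y\rangle \pmod 1$, $b:\overline{\Lambda}\times\overline{\Lambda}\to\mathbb{Q}/\mathbb{Z}$. $\mathrm{Char}(\Lambda) = \{\chi\in\Lambda^*: \langle\chi,y\rangle\equiv|y| \pmod 2\ \forall y\in\Lambda\}$, $C(\Lambda) = \mathrm{Char}(\Lambda)/2\Lambda$, a torsor over $2\Lambda^*/2\Lambda\cong\overline{\Lambda}$ via $[\chi]+\bar x = [\chi+2x]$. $\rho: C(\Lambda)\to\mathbb{Q}/2\mathbb{Z}$, $\rho([\chi]) \equiv (|\chi| - \sigma(\Lambda))/4 \pmod 2$. An isomorphism $(C(\Lambda_1),\rho_1)\to(C(\Lambda_2),\rho_2)$ is a bijection $\varphi: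 C(\Lambda_1)\to C(\Lambda_2)$ and a group isomorphism $\varphi: \overline{\Lambda}_1\to\overline{\Lambda}_2$ with $\rho_2\circ\varphi = \rho_1$ and $\varphi(c)-\varphi(c') = \varphi(c-c')$. An isomorphism of discriminant forms is a group isomorphism $\varphi$ with $b_2(\varphi\bar x,\varphi\bar y) = b_1(\bar x,\bar y)$. *)

From HB Require Import structures.
From mathcomp Require Import all_boot all_order all_algebra.
From Stdlib Require Import ClassicalEpsilon.
Set Implicit Arguments. Unset Strict Implicit. Unset Printing Implicit Defensive.
Import Order.TTheory GRing.Theory Num.Theory.
Local Open Scope ring_scope.

(* An integral lattice of rank n is Z^n with Gram matrix Q : 'M[int]_n,
   symmetric and non-degenerate.  Vectors of Λ ⊗ Q are row vectors 'rV[rat]_n. *)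
Definition lattice_gram (n : nat) (Q : 'M[int]_n) : Prop :=
  Q^T = Q /\ \det Q != 0.

Definition qvec (n : nat) := 'rV[rat]_n.

Definition gramQ (n : nat) (Q : 'M[int]_n) : 'M[rat]_n := map_mx intr Q.

Definition bform (n : nat) (Q : 'M[int]_n) (x y : qvec n) : rat :=
  (x *m gramQ Q *m y^T) 0 0.

Definition inLat (n : nat) (x : qvec n) : Prop := forall i, x 0 i \is a Num.int.

Definition inDual (n : nat) (Q : 'M[int]_n) (x : qvec n) : Prop :=
  forall y, inLat y -> bform Q x y \is a Num.int.

(* congruence of rationals modulo m (m = 1 : Q/Z, m = 2 : Q/2Z) *)
Definition eqmodQ (m a b : rat) : Prop := (a - b) / m \is a Num.int.

Definition isChar (n : nat) (Q : 'M[int]_n) (chi : qvec n) : Prop :=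
  inDual Q chi /\ forall y, inLat y -> eqmodQ 2 (bform Q chi y) (bform Q y y).

(* equality in Λ̄ = Λ^*/Λ of representatives *)
Definition eqDisc (n : nat) (x y : qvec n) : Prop := inLat (x - y).

(* equality in C(Λ) = Char(Λ)/2Λ of representatives *)
Definition eqChar (n : nat) (chi chi' : qvec n) : Prop :=
  inLat ((2%:R)^-1 *: (chi - chi')).

(* signature: p - q for a rational diagonalisation P Q P^T = diag d
   (well defined by Sylvester's law of inertia) *)
Definition is_signature (n : nat) (Q : 'M[int]_n) (s : int) : Prop :=
  exists (P : 'M[rat]_n) (d : 'rV[rat]_n),
    [/\ P \in unitmx, P *m gramQ Q *m P^T = diag_mx d &
        s = (#|[set i | 0 < d 0 i]|)%:Z - (#|[set i | d 0 i < 0]|)%:Z].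

Definition signature (n : nat) (Q : 'M[int]_n) : int :=
  epsilon (inhabits 0%R) (is_signature Q).

(* ρ([χ]) = (|χ| - σ)/4, a value in Q/2Z (compared via eqmodQ 2) *)
Definition rho (n : nat) (Q : 'M[int]_n) (chi : qvec n) : rat :=
  (bform Q chi chi - (signature Q)%:~R) / 4%:R.

(* An isomorphism (C(Λ1),ρ1) -> (C(Λ2),ρ2), given on representatives:
   fC : Char(Λ1) -> Char(Λ2) inducing a bijection C(Λ1) -> C(Λ2),
   g  : Λ1^* -> Λ2^* inducing a group isomorphism Λ̄1 -> Λ̄2,
   with ρ2 ∘ fC = ρ1 and fC(c) - fC(c') = g(c - c'), where the torsor
   difference [χ] - [χ'] is the class of (χ - χ')/2 in Λ̄. *)
Definition rho_iso (n1 n2 : nat) (Q1 : 'M[int]_n1) (Q2 : 'M[int]_n2)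
    (fC : qvec n1 -> qvec n2) (g : qvec n1 -> qvec n2) : Prop :=
  [/\ (forall chi, isChar Q1 chi -> isChar Q2 (fC chi)),
      (forall chi chi', isChar Q1 chi -> isChar Q1 chi' ->
          eqChar chi chi' -> eqChar (fC chi) (fC chi')),
      (forall chi chi', isChar Q1 chi -> isChar Q1 chi' ->
          eqChar (fC chi) (fC chi') -> eqChar chi chi') &
      (forall psi, isChar Q2 psi -> exists2 chi, isChar Q1 chi & eqChar (fC chi) psi)] /\
  [/\ (forall x, inDual Q1 x -> inDual Q2 (g x)),
      (forall x y, inDual Q1 x -> inDual Q1 y -> eqDisc x y -> eqDisc (g x) (g y)),
      (forall x y, inDual Q1 x -> inDual Q1 y -> eqDisc (g (x + y)) (g x + g y)),
      (forall x y, inDual Q1 x -> inDual Q1 y -> eqDisc (g x) (g y) -> eqDisc x y) &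
      (forall z, inDual Q2 z -> exists2 x, inDual Q1 x & eqDisc (g x) z)] /\
  [/\ (forall chi, isChar Q1 chi -> eqmodQ 2 (rho Q2 (fC chi)) (rho Q1 chi)) &
      (forall chi chi', isChar Q1 chi -> isChar Q1 chi' ->
          eqDisc ((2%:R)^-1 *: (fC chi - fC chi')) (g ((2%:R)^-1 *: (chi - chi'))))].

From mathcomp Require Import all_boot all_order all_algebra.
From mathcomp Require Import zify ring.
Import GRing.Theory Num.Theory.
Local Open Scope ring_scope.

(* Writing [rho] additively, [rho (chi + 2u) - rho chi = <chi,u> + |u|], so the
   second difference [rho (chi + 2(x+y)) - rho (chi + 2x) - rho (chi + 2y) + rho chi]
   equals [2 <x,y>].  Modulo 2 the left-hand side only depends on [rho] and on
   the classes of [x], [y] in the discriminant group, which the isomorphism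
   transports; hence [<g x, g y> = <x,y>] modulo 1.  A characteristic vector to
   start from is the Wu vector [w G^-1], where [w] is the diagonal of the Gram
   matrix [G]. *)

Set Implicit Arguments. Unset Strict Implicit.

Section Congruence.
Variable m : rat.

Lemma eqmodQ_refl a : eqmodQ m a a.
Proof. by rewrite /eqmodQ subrr mul0r. Qed.

Lemma eqmodQ_sym a b : eqmodQ m a b -> eqmodQ m b a.
Proof. by rewrite /eqmodQ -opprB mulNr rpredN. Qed.

Lemma eqmodQ_trans a b c : eqmodQ m a b -> eqmodQ m b c -> eqmodQ m a c.
Proof.
rewrite /eqmodQ => hab hbc.
by rewrite -[a](subrK b) -addrA mulrDl rpredD.
Qed.

Lemma eqmodQD a b c d :
  eqmodQ m a b -> eqmodQ m c d -> eqmodQ m (a + c) (b + d).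
Proof.
rewrite /eqmodQ => hab hcd.
by rewrite opprD addrACA mulrDl rpredD.
Qed.

Lemma eqmodQN a b : eqmodQ m a b -> eqmodQ m (- a) (- b).
Proof. by rewrite /eqmodQ -opprD mulNr rpredN. Qed.

Lemma eqmodQB a b c d :
  eqmodQ m a b -> eqmodQ m c d -> eqmodQ m (a - c) (b - d).
Proof. by move=> hab /eqmodQN; apply: eqmodQD. Qed.

End Congruence.

Lemma eqmodQ2_halve a b : eqmodQ 2 (2 * a) (2 * b) -> eqmodQ 1 a b.
Proof.
by rewrite /eqmodQ divr1; have -> : (2 * a - 2 * b) / 2 = a - b :> rat by field.
Qed.

Section BilinearForm.
Variables (n : nat) (Q : 'M[int]_n).

Lemma bformDl x y z : bform Q (x + y) z = bform Q x z + bform Q y z.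
Proof. by rewrite /bform !mulmxDl mxE. Qed.

Lemma bformDr x y z : bform Q z (x + y) = bform Q z x + bform Q z y.
Proof. by rewrite /bform linearD /= mulmxDr mxE. Qed.

Lemma bformZl a x z : bform Q (a *: x) z = a * bform Q x z.
Proof. by rewrite /bform -!scalemxAl mxE. Qed.

Lemma bformZr a x z : bform Q z (a *: x) = a * bform Q z x.
Proof. by rewrite /bform linearZ /= -scalemxAr mxE. Qed.

Lemma bformC x y : Q^T = Q -> bform Q x y = bform Q y x.
Proof.
move=> symQ; have trE (A : 'M[rat]_1) : A 0 0 = A^T 0 0 by rewrite mxE.
by rewrite /bform trE !trmx_mul trmxK /gramQ map_trmx symQ mulmxA.
Qed.

Lemma inLat0 : inLat (0 : qvec n).
Proof. by move=> i; rewrite mxE. Qed.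

Lemma inLatD (x y : qvec n) : inLat x -> inLat y -> inLat (x + y).
Proof. by move=> hx hy i; rewrite mxE rpredD. Qed.

Lemma bform_int x y : inLat x -> inLat y -> bform Q x y \is a Num.int.
Proof.
move=> hx hy; rewrite /bform mxE; apply: rpred_sum => j _.
rewrite !mxE rpredM //; apply: rpred_sum => k _.
by rewrite /gramQ mxE rpredM ?intr_int.
Qed.

Lemma inDualD x y : inDual Q x -> inDual Q y -> inDual Q (x + y).
Proof. by move=> hx hy z hz; rewrite bformDl rpredD ?hx ?hy. Qed.

Lemma isChar_shift chi x : isChar Q chi -> inDual Q x -> isChar Q (chi + 2%:R *: x).
Proof.
move=> [dual_chi char_chi] hx; split=> y hy.
  by rewrite bformDl bformZl rpredD ?rpredM ?hx ?dual_chi.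
rewrite /eqmodQ bformDl bformZl.
have -> : (bform Q chi y + 2%:R * bform Q x y - bform Q y y) / 2 =
  (bform Q chi y - bform Q y y) / 2 + bform Q x y by field.
by rewrite rpredD ?hx ?char_chi.
Qed.

End BilinearForm.

Section Characteristic.
Variables (n : nat) (Q : 'M[int]_n).
Hypothesis symQ : Q^T = Q.

Lemma char_condD chi a b :
  eqmodQ 2 (bform Q chi a) (bform Q a a) ->
  eqmodQ 2 (bform Q chi b) (bform Q b b) ->
  inLat a -> inLat b ->
  eqmodQ 2 (bform Q chi (a + b)) (bform Q (a + b) (a + b)).
Proof.
move=> ha hb la lb; rewrite bformDr !bformDl !bformDr (bformC b a symQ).
have -> : bform Q a a + bform Q a b + (bform Q a b + bform Q b b) =
  bform Q a a + bform Q b b + 2 * bform Q a b by ring.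
rewrite -[X in eqmodQ _ X]addr0; apply: eqmodQD; first exact: eqmodQD.
by rewrite /eqmodQ sub0r mulNr mulrC mulKf // rpredN bform_int.
Qed.

Lemma int_mul_pred_even (z : int) : exists k : int, z * (z - 1) = 2 * k.
Proof. exists ((z %/ 2)%Z * ((z %/ 2)%Z * 2 + 2 * (z %% 2)%Z - 1)); nia. Qed.

Let wu : qvec n := \row_i (Q i i)%:~R.

Lemma char_cond_basis chi (i : 'I_n) (z : rat) :
  (forall y, bform Q chi y = (wu *m y^T) 0 0) -> z \is a Num.int ->
  eqmodQ 2 (bform Q chi (z *: delta_mx 0 i)) (bform Q (z *: delta_mx 0 i) (z *: delta_mx 0 i)).
Proof.
move=> bform_chi /intrP [k ->].
have col_delta (w : qvec n) : (w *m (delta_mx 0 i : qvec n)^T) 0 0 = w 0 i.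
  by rewrite trmx_delta -colE mxE.
rewrite bform_chi linearZ /= -scalemxAr mxE col_delta mxE.
rewrite bformZl bformZr /bform -rowE col_delta !mxE.
have [j hj] := int_mul_pred_even k.
rewrite /eqmodQ; have -> : (k%:~R * (Q i i)%:~R - k%:~R * (k%:~R * (Q i i)%:~R)) / 2
  = - ((k * (k - 1))%:~R / 2 * (Q i i)%:~R) :> rat.
  by rewrite rmorphM rmorphB /=; field.
rewrite hj rmorphM /=.
have -> : (2%:~R * j%:~R / 2 : rat) = j%:~R by field.
by rewrite rpredN rpredM ?intr_int.
Qed.

Lemma isChar_exists : \det Q != 0 -> exists chi, isChar Q chi.
Proof.
move=> detQ; have unitG : gramQ Q \in unitmx.
  by rewrite unitmxE /gramQ det_map_mx unitfE intr_eq0.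
exists (wu *m invmx (gramQ Q)).
have bform_chi y : bform Q (wu *m invmx (gramQ Q)) y = (wu *m y^T) 0 0.
  by rewrite /bform mulmxKV.
split=> [y hy | y hy].
  rewrite bform_chi mxE; apply: rpred_sum => j _.
  by rewrite !mxE rpredM ?intr_int.
pose char_on v := inLat v /\ eqmodQ 2 (bform Q (wu *m invmx (gramQ Q)) v) (bform Q v v).
suff [] : char_on y by [].
rewrite [y]row_sum_delta; apply: (big_ind char_on) => [|a b [la ha] [lb hb] | i _].
- by split; [exact: inLat0 | rewrite /bform trmx0 !mulmx0 mxE; exact: eqmodQ_refl].
- by split; [exact: inLatD | exact: char_condD].
- split; first by move=> j; rewrite !mxE rpredM ?hy ?natr_int.
  exact: char_cond_basis.
Qed.

Lemma rho_shift chi u :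
  rho Q (chi + 2%:R *: u) - rho Q chi = bform Q chi u + bform Q u u.
Proof.
rewrite /rho !(bformDl, bformDr, bformZl, bformZr) (bformC u chi symQ).
by field.
Qed.

Lemma rho_second_difference chi x y :
  rho Q (chi + 2%:R *: (x + y)) - rho Q (chi + 2%:R *: x)
    - rho Q (chi + 2%:R *: y) + rho Q chi = 2 * bform Q x y.
Proof.
have -> : rho Q (chi + 2%:R *: (x + y)) - rho Q (chi + 2%:R *: x)
    - rho Q (chi + 2%:R *: y) + rho Q chi =
  (rho Q (chi + 2%:R *: (x + y)) - rho Q chi) - (rho Q (chi + 2%:R *: x) - rho Q chi)
    - (rho Q (chi + 2%:R *: y) - rho Q chi) by ring.
rewrite !rho_shift !(bformDl, bformDr) (bformC y x symQ).
by ring.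
Qed.

Lemma rho_shift_lattice chi l :
  isChar Q chi -> inLat l -> eqmodQ 2 (rho Q (chi + 2%:R *: l)) (rho Q chi).
Proof.
move=> [_ char_chi] hl; rewrite /eqmodQ rho_shift.
have -> : (bform Q chi l + bform Q l l) / 2 =
  (bform Q chi l - bform Q l l) / 2 + bform Q l l by field.
by rewrite rpredD ?bform_int ?char_chi.
Qed.

Lemma rho_eqDisc chi u v : isChar Q chi -> inDual Q v -> eqDisc u v ->
  eqmodQ 2 (rho Q (chi + 2%:R *: u)) (rho Q (chi + 2%:R *: v)).
Proof.
move=> char_chi dual_v huv.
have -> : chi + 2%:R *: u = chi + 2%:R *: v + 2%:R *: (u - v).
  by rewrite -addrA -scalerDr [v + _]addrC subrK.
by apply: rho_shift_lattice => //; apply: isChar_shift.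
Qed.

End Characteristic.

Lemma rho_iso_shift (n1 n2 : nat) (Q1 : 'M[int]_n1) (Q2 : 'M[int]_n2)
    (fC g : qvec n1 -> qvec n2) chi x :
  Q2^T = Q2 -> rho_iso Q1 Q2 fC g -> isChar Q1 chi -> inDual Q1 x ->
  eqmodQ 2 (rho Q2 (fC chi + 2%:R *: g x)) (rho Q1 (chi + 2%:R *: x)).
Proof.
move=> symQ2 [[fC_char _ _ _] [[g_dual _ _ _ _] [fC_rho fC_diff]]] char_chi dual_x.
have char_chix := isChar_shift char_chi dual_x.
have [a fC_chix a_gx] : exists2 a, fC (chi + 2%:R *: x) = fC chi + 2%:R *: a
                                & eqDisc a (g x).
  exists ((2%:R)^-1 *: (fC (chi + 2%:R *: x) - fC chi)).
    by rewrite scalerA mulfV // scale1r [fC chi + _]addrC subrK.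
  have := fC_diff _ _ char_chix char_chi.
  by rewrite [_ - chi]addrAC subrr add0r scalerA mulVf // scale1r.
apply: (eqmodQ_trans _ (fC_rho _ char_chix)); rewrite fC_chix.
apply/eqmodQ_sym/(rho_eqDisc symQ2) => //; [exact: fC_char | exact: g_dual].
Qed.

Unset Implicit Arguments.

Theorem lemma2p3 (n1 n2 : nat) (Q1 : 'M[int]_n1) (Q2 : 'M[int]_n2)
    (fC g : qvec n1 -> qvec n2) :
  lattice_gram Q1 -> lattice_gram Q2 ->
  rho_iso Q1 Q2 fC g ->
  forall x y, inDual Q1 x -> inDual Q1 y ->
    eqmodQ 1 (bform Q2 (g x) (g y)) (bform Q1 x y).
Proof.
move=> [symQ1 detQ1] [symQ2 _] iso x y dual_x dual_y.
have [chi char_chi] := isChar_exists symQ1 detQ1.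
case: (iso) => [[fC_char _ _ _] [[g_dual _ g_add _ _] [fC_rho _]]].
have dual_xy := inDualD dual_x dual_y.
have rho_sum : eqmodQ 2 (rho Q2 (fC chi + 2%:R *: (g x + g y)))
                        (rho Q1 (chi + 2%:R *: (x + y))).
  apply: (eqmodQ_trans _ (rho_iso_shift symQ2 iso char_chi dual_xy)).
  apply/eqmodQ_sym/(rho_eqDisc symQ2); first exact: fC_char.
  - by apply: inDualD; apply: g_dual.
  - exact: g_add.
apply: eqmodQ2_halve.
rewrite -(rho_second_difference symQ1 chi) -(rho_second_difference symQ2 (fC chi)).
apply: eqmodQD; first apply: eqmodQB; first apply: eqmodQB.
- exact: rho_sum.
- exact: rho_iso_shift.
- exact: rho_iso_shift.
- exact: fC_rho.
Qed.
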